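(* Let $K$ be an algebraic number field and $J\subseteq\mathcal O_K$ a nonzero ideal. Then the action of $\mathcal O_K^*$ on $\hat J$ has the ID property if and only if the action of $\mathcal O_K^*$ on $\widehat{\mathcal O_K}$ has the ID property.
   Context: $\mathcal O_K$ is the ring of integers of $K$, $\mathcal O_K^*$ its unit group. For a nonzero ideal $J$, $\hat J$ is the Pontryagin dual of the additive group $J$, with $\mathcal O_K^*$ acting by $(u\cdot\chi)(j)=\chi(uj)$. An action of a group $G$ on a compact space $X$ by homeomorphisms has the ID (infinite invariant dense) property if the only closed infinite $G$-invariant subset of $X$ is $X$ itself. *)

From HB Require Import structures.
From Stdlib Require Import Reals ZArith List.
From mathcomp Require Import all_boot all_order all_algebra all_field.
Set Implicit Arguments. Unset Strict Implicit. Unset Printing Implicit Defensive.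
Import GRing.Theory.

Section Defs.
Local Open Scope ring_scope.
Variable K : fieldExtType rat.

Definition in_OK (x : K) : Prop :=
  exists p : {poly int}, p \is monic /\ root (map_poly (fun z : int => z%:~R) p) x.

Definition unit_OK (u : K) : Prop :=
  in_OK u /\ u <> 0%R /\ in_OK (u^-1)%R.

Definition is_ideal_OK (J : K -> Prop) : Prop :=
  (forall x, J x -> in_OK x) /\ J 0%R /\
  (forall x y, J x -> J y -> J (x + y)%R) /\
  (forall x, J x -> J (- x)%R) /\
  (forall r x, in_OK r -> J x -> J (r * x)%R).

Definition nonzero_ideal (J : K -> Prop) : Prop := exists x, J x /\ x <> 0%R.

Definition is_intR (t : R) : Prop := exists z : Z, t = IZR z.
Definition near_intR (t eps : R) : Prop := exists z : Z, Rlt (Rabs (Rminus t (IZR z))) eps.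

(* A character of the additive group J, i.e. a homomorphism J -> R/Z,
   represented by a real-valued lift (values off J are irrelevant). *)
Definition is_char (J : K -> Prop) (chi : K -> R) : Prop :=
  forall a b, J a -> J b -> is_intR (Rminus (chi (a + b)%R) (Rplus (chi a) (chi b))).

(* two lifts represent the same element of the dual group \hat J *)
Definition char_eq (J : K -> Prop) (chi psi : K -> R) : Prop :=
  forall a, J a -> is_intR (Rminus (chi a) (psi a)).

Definition unit_act (u : K) (chi : K -> R) : K -> R := fun j => chi (u * j)%R.

(* Subsets of \hat J: predicates on lifts that consist of characters and are
   saturated under char_eq. *)
Definition dual_subset (J : K -> Prop) (S : (K -> R) -> Prop) : Prop :=
  (forall chi, S chi -> is_char J chi) /\
  (forall chi psi, S chi -> is_char J psi -> char_eq J chi psi -> S psi).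

(* closed in the compact (= pointwise convergence, J being discrete) topology *)
Definition dual_closed (J : K -> Prop) (S : (K -> R) -> Prop) : Prop :=
  forall chi, is_char J chi ->
    (forall (F : list K) (eps : R), Rlt 0 eps ->
       exists psi, S psi /\
         forall a, In a F -> J a -> near_intR (Rminus (psi a) (chi a)) eps) ->
    S chi.

Definition dual_infinite (J : K -> Prop) (S : (K -> R) -> Prop) : Prop :=
  forall l : list (K -> R),
    exists chi, S chi /\ forall psi, In psi l -> ~ char_eq J chi psi.

Definition unit_invariant (S : (K -> R) -> Prop) : Prop :=
  forall u chi, unit_OK u -> S chi -> S (unit_act u chi).

Definition ID_property (J : K -> Prop) : Prop :=
  forall S : (K -> R) -> Prop,
    dual_subset J S -> dual_closed J S -> dual_infinite J S -> unit_invariant S ->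
    forall chi, is_char J chi -> S chi.
End Defs.

(* Multiplication by y <> 0 with y A ⊆ B induces the unit-equivariant continuous
   map psi ↦ psi(y ·) from B^ to A^. It is onto: every R/Z-valued character of
   the subgroup y A of the countable group K extends to K, adjoining one element
   at a time (R/Z is divisible). Pulling a closed infinite invariant subset of
   A^ back along this map gives one of B^, so the ID property passes from B^ to
   A^. Apply this to (A, B) = (O_K, J) with 0 <> y ∈ J, and to (J, O_K) with
   y = 1. *)

From Stdlib Require Import Reals ZArith List Lia Setoid Morphisms Wf_nat.
From Stdlib Require Import Classical ClassicalEpsilon FunctionalExtensionality.
From mathcomp Require Import all_boot all_order all_algebra all_field.
From mathcomp Require Import zify ssrZ.
Set Implicit Arguments. Unset Strict Implicit. Unset Printing Implicit Defensive.
Import GRing.Theory.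

Definition eqmod1 (x y : R) : Prop := is_intR (Rminus x y).
Notation "x ≡ y" := (eqmod1 x y) (at level 70).

Definition intR (k : int) : R := IZR (Z_of_int k).

Local Open Scope R_scope.

Lemma intRD a b : intR (a + b) = intR a + intR b.
Proof. by rewrite /intR -plus_IZR; congr IZR; lia. Qed.

Lemma intRN a : intR (- a) = - intR a.
Proof. by rewrite /intR -opp_IZR; congr IZR; lia. Qed.

Lemma intRM a b : intR (a * b) = intR a * intR b.
Proof. by rewrite /intR -mult_IZR; congr IZR; lia. Qed.

Lemma intR1 : intR 1 = 1.
Proof. by []. Qed.

Lemma eqmod1_refl : Reflexive eqmod1.
Proof. by move=> x; exists Z0; rewrite Rminus_diag. Qed.

Lemma eqmod1_sym : Symmetric eqmod1.
Proof. by move=> x y [a Ha]; exists (Z.opp a); rewrite opp_IZR -Ha; ring. Qed.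

Lemma eqmod1_trans : Transitive eqmod1.
Proof. by move=> x y z [a Ha] [b Hb]; exists (Z.add a b); rewrite plus_IZR -Ha -Hb; ring. Qed.

Add Relation R eqmod1
  reflexivity proved by eqmod1_refl
  symmetry proved by eqmod1_sym
  transitivity proved by eqmod1_trans as eqmod1_rel.

#[export] Instance Rplus_eqmod1 : Proper (eqmod1 ==> eqmod1 ==> eqmod1) Rplus.
Proof. by move=> x x' [a Ha] y y' [b Hb]; exists (Z.add a b); rewrite plus_IZR -Ha -Hb; ring. Qed.

#[export] Instance Ropp_eqmod1 : Proper (eqmod1 ==> eqmod1) Ropp.
Proof. by move=> x x' [a Ha]; exists (Z.opp a); rewrite opp_IZR -Ha; ring. Qed.

#[export] Instance Rmult_intR_eqmod1 k : Proper (eqmod1 ==> eqmod1) (Rmult (intR k)).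
Proof. by move=> x x' [a Ha]; exists (Z.mul (Z_of_int k) a); rewrite mult_IZR -Ha /intR; ring. Qed.

Lemma eqmod1_eq x y : x = y -> x ≡ y.
Proof. by move->; reflexivity. Qed.

Lemma eqmod1_addl x y z : x + y ≡ x + z -> y ≡ z.
Proof. by move=> [a Ha]; exists a; rewrite -Ha; ring. Qed.

Local Close Scope R_scope.
Local Open Scope ring_scope.

Section Characters.
Variable V : zmodType.

Record is_subgroup (C : V -> Prop) : Prop := IsSubgroup {
  subgroup0 : C 0;
  subgroupD : forall x y, C x -> C y -> C (x + y);
  subgroupN : forall x, C x -> C (- x)
}.

Definition char_on (C : V -> Prop) (f : V -> R) : Prop :=
  forall a b, C a -> C b -> f (a + b) ≡ f a + f b.

Definition char_eqv (C : V -> Prop) (f g : V -> R) : Prop :=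
  forall a, C a -> f a ≡ g a.

Lemma char_on_subset (C D : V -> Prop) f :
  (forall x, C x -> D x) -> char_on D f -> char_on C f.
Proof. by move=> CD fD a b Ca Cb; apply: fD; apply: CD. Qed.

Variable C : V -> Prop.
Hypothesis C_subgroup : is_subgroup C.

Lemma subgroupB x y : C x -> C y -> C (x - y).
Proof. by move=> Cx Cy; apply: subgroupD (subgroupN _ _). Qed.

Lemma subgroup_mulrn x n : C x -> C (x *+ n).
Proof.
move=> Cx; elim: n => [|n IHn]; first exact: subgroup0.
by rewrite mulrS; apply: subgroupD.
Qed.

Lemma subgroup_mulrz x k : C x -> C (x *~ k).
Proof.
move=> Cx; case: k => n /=; first exact: subgroup_mulrn.
by apply: (subgroupN C_subgroup); apply: subgroup_mulrn.
Qed.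

Variable f : V -> R.
Hypothesis f_char : char_on C f.

Lemma char_onD a b : C a -> C b -> f (a + b) ≡ f a + f b.
Proof. exact: f_char. Qed.

Lemma char_on0 : f 0 ≡ 0.
Proof.
have C0 := subgroup0 C_subgroup.
apply: (@eqmod1_addl (f 0)); rewrite Rplus_0_r -(char_onD C0 C0) addr0; reflexivity.
Qed.

Lemma char_onN x : C x -> f (- x) ≡ - f x.
Proof.
move=> Cx; apply: (@eqmod1_addl (f x)).
rewrite -char_onD ?addrN ?Rplus_opp_r; [exact: char_on0 | done | exact: subgroupN].
Qed.

Lemma char_on_mulrn x n : C x -> f (x *+ n) ≡ intR n%:Z * f x.
Proof.
move=> Cx; elim: n => [|n IHn]; first by rewrite Rmult_0_l; exact: char_on0.
rewrite mulrSr char_onD ?IHn //; last exact: subgroup_mulrn.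
by apply: eqmod1_eq; rewrite -addn1 PoszD intRD intR1; ring.
Qed.

Lemma char_on_mulrz x k : C x -> f (x *~ k) ≡ intR k * f x.
Proof.
move=> Cx; case: k => n /=; first exact: char_on_mulrn.
rewrite char_onN ?char_on_mulrn //; last exact: subgroup_mulrn.
by apply: eqmod1_eq; rewrite NegzE intRN; ring.
Qed.

End Characters.

Lemma int_subgroup_cyclic (P : int -> Prop) :
  is_subgroup P -> exists2 n, P n & forall m, P m -> (n %| m)%Z.
Proof.
move=> P_sub.
have [[k Pk]|no_pos] := classic (exists k : nat, P k.+1%:Z); last first.
  exists 0; first exact: subgroup0.
  move=> m Pm; rewrite dvd0z; apply/eqP; apply: NNPP => m_neq0; apply: no_pos.
  case: m Pm m_neq0 => [[|k]|k] Pm m_neq0 //; first by exists k.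
  by exists k; rewrite -[_%:Z]opprK -NegzE; apply: subgroupN.
have [d [[Pd d_min] _]] := dec_inh_nat_subset_has_unique_least_element
  (fun k => P k.+1%:Z) (fun k => classic _) (ex_intro _ k Pk).
exists d.+1%:Z => // m Pm; apply/dvdz_mod0P; apply: NNPP => r_neq0.
have Pr : P (m %% d.+1)%Z.
  have -> : (m %% d.+1)%Z = m - (m %/ d.+1)%Z * d.+1.
    by rewrite {2}(divz_eq m d.+1) addrAC subrr add0r.
  by apply: subgroupB => //; rewrite mulrC -mulrzz; exact: (subgroup_mulrz P_sub).
have := modz_ge0 m (isT : d.+1%:Z != 0); have := ltz_pmod m (isT : 0 < d.+1%:Z).
case: (m %% d.+1)%Z Pr r_neq0 => [[|j]|j] //= Pj _ lt_jd _.
by have := d_min j Pj; lia.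
Qed.

Section Adjoin.
Variables (V : zmodType) (C : V -> Prop) (f : V -> R) (b : V).
Hypotheses (C_subgroup : is_subgroup C) (f_char : char_on C f).

Definition adjoin (x : V) : Prop := exists c k, C c /\ x = c + b *~ k.

Lemma adjoin_subgroup : is_subgroup adjoin.
Proof.
split.
- by exists 0, 0; rewrite mulr0z addr0; split => //; exact: subgroup0.
- move=> _ _ [c1 [k1 [Cc1 ->]]] [c2 [k2 [Cc2 ->]]].
  exists (c1 + c2), (k1 + k2); split; first exact: subgroupD.
  by rewrite mulrzDr addrACA.
- move=> _ [c [k [Cc ->]]]; exists (- c), (- k); split; first exact: subgroupN.
  by rewrite mulrNz opprD.
Qed.

Lemma adjoin_sub x : C x -> adjoin x.
Proof. by move=> Cx; exists x, 0; rewrite mulr0z addr0. Qed.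

Lemma adjoin_gen : adjoin b.
Proof. by exists 0, 1; rewrite add0r; split => //; exact: subgroup0. Qed.

Definition multiple_in (m : int) : Prop := C (b *~ m).

Lemma multiple_in_subgroup : is_subgroup multiple_in.
Proof.
split; rewrite /multiple_in.
- by rewrite mulr0z; exact: subgroup0.
- by move=> m n Cm Cn; rewrite mulrzDr; exact: subgroupD.
- by move=> m Cm; rewrite mulrNz; exact: subgroupN.
Qed.

Definition is_multiple_gen (n : int) : Prop :=
  multiple_in n /\ forall m, multiple_in m -> (n %| m)%Z.

Definition multiple_gen : int := epsilon (inhabits 0) is_multiple_gen.

Lemma multiple_genP : is_multiple_gen multiple_gen.
Proof.
have [n Cn n_dvd] := int_subgroup_cyclic multiple_in_subgroup.
exact: (epsilon_spec (inhabits 0) _ (ex_intro _ n (conj Cn n_dvd))).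
Qed.

(* Choosing the generator n (rather than any n with n b in C) is what makes
   [char_multiple] hold for every m; when n = 0 the value is irrelevant. *)
Definition adjoin_val : R := Rdiv (f (b *~ multiple_gen)) (intR multiple_gen).

Lemma char_gen : f (b *~ multiple_gen) ≡ intR multiple_gen * adjoin_val.
Proof.
have [-> | n_neq0] := eqVneq multiple_gen 0.
  by rewrite mulr0z Rmult_0_l; exact: (char_on0 C_subgroup f_char).
apply: eqmod1_eq; rewrite /adjoin_val; field.
by rewrite /intR; apply: not_0_IZR; lia.
Qed.

Lemma char_multiple m : C (b *~ m) -> f (b *~ m) ≡ intR m * adjoin_val.
Proof.
have [gen_in gen_dvd] := multiple_genP.
move=> /gen_dvd /dvdzP [q ->].
rewrite mulrC mulrzA (char_on_mulrz C_subgroup f_char) // char_gen.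
by apply: eqmod1_eq; rewrite intRM; ring.
Qed.

Definition is_adjoin_rep (x : V) (p : V * int) : Prop := C p.1 /\ x = p.1 + b *~ p.2.

Definition adjoin_rep (x : V) : V * int := epsilon (inhabits (0, 0)) (is_adjoin_rep x).

Definition adjoin_char (x : V) : R :=
  Rplus (f (adjoin_rep x).1) (Rmult (intR (adjoin_rep x).2) adjoin_val).

Lemma adjoin_repP x : adjoin x -> is_adjoin_rep x (adjoin_rep x).
Proof.
move=> [c [k [Cc ->]]].
exact: (epsilon_spec (inhabits (0, 0)) _ (ex_intro _ (c, k) (conj Cc erefl))).
Qed.

Lemma adjoin_charE c k : C c -> adjoin_char (c + b *~ k) ≡ f c + intR k * adjoin_val.
Proof.
move=> Cc; have [] := adjoin_repP (ex_intro _ c (ex_intro _ k (conj Cc erefl))).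
rewrite /adjoin_char; case: (adjoin_rep _) => c' k' /= Cc' E.
have Ec : c = c' + b *~ (k' - k) by rewrite mulrzBr addrA -E addrK.
have Cdiff : C (b *~ (k' - k)).
  by rewrite -[b *~ _](addKr c') -Ec; apply: subgroupD => //; exact: subgroupN.
rewrite Ec (char_onD f_char) // char_multiple //.
by apply: eqmod1_eq; rewrite intRD intRN; ring.
Qed.

Lemma adjoin_char_on : char_on adjoin adjoin_char.
Proof.
move=> _ _ [c1 [k1 [Cc1 ->]]] [c2 [k2 [Cc2 ->]]].
rewrite addrACA -mulrzDr !adjoin_charE //; last exact: subgroupD.
rewrite (char_onD f_char) //; apply: eqmod1_eq; rewrite intRD; ring.
Qed.

Lemma adjoin_char_eqv : char_eqv C f adjoin_char.
Proof.
move=> c Cc; have := adjoin_charE 0 Cc; rewrite mulr0z addr0 => ->.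
by apply: eqmod1_eq; rewrite /intR /=; ring.
Qed.

End Adjoin.

Section Extension.
Variables (V : zmodType) (code : V -> nat) (decode : nat -> V).
Hypothesis codeK : cancel code decode.
Variables (C : V -> Prop) (f : V -> R).
Hypotheses (C_subgroup : is_subgroup C) (f_char : char_on C f).

Fixpoint stage (n : nat) : (V -> Prop) * (V -> R) :=
  if n is n'.+1 then
    let: (D, g) := stage n' in (adjoin D (decode n'), adjoin_char D g (decode n'))
  else (C, f).

Lemma stage_char n : is_subgroup (stage n).1 /\ char_on (stage n).1 (stage n).2.
Proof.
elim: n => [|n IHn] /=; first by split.
case: (stage n) IHn => D g [D_subgroup g_char] /=.
by split; [exact: adjoin_subgroup | exact: adjoin_char_on].
Qed.

Lemma stage_succ n : (forall x, (stage n).1 x -> (stage n.+1).1 x) /\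
  char_eqv (stage n).1 (stage n).2 (stage n.+1).2.
Proof.
have [D_subgroup g_char] := stage_char n.
rewrite /=; case: (stage n) D_subgroup g_char => D g /= D_subgroup g_char.
by split=> [x|]; [exact: adjoin_sub | exact: adjoin_char_eqv].
Qed.

Lemma stage_mono n m : (n <= m)%N ->
  (forall x, (stage n).1 x -> (stage m).1 x) /\ char_eqv (stage n).1 (stage n).2 (stage m).2.
Proof.
elim: m => [|m IHm].
  by rewrite leqn0 => /eqP ->; split => // x _; reflexivity.
rewrite leq_eqVlt ltnS => /predU1P [-> | /IHm [sub_nm eqv_nm]].
  by split => // x _; reflexivity.
have [sub_m eqv_m] := stage_succ m.
split=> [x /sub_nm /sub_m // | x Dx].
by rewrite eqv_nm // eqv_m; [reflexivity | exact: sub_nm].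
Qed.

Lemma stage_code x : (stage (code x).+1).1 x.
Proof.
have [D_subgroup _] := stage_char (code x).
rewrite /=; case: (stage (code x)) D_subgroup => D g /= D_subgroup.
by rewrite codeK; exact: adjoin_gen.
Qed.

Definition ext_char (x : V) : R := (stage (code x).+1).2 x.

Lemma ext_char_stage x m : ((code x).+1 <= m)%N ->
  (stage m).1 x /\ ext_char x ≡ (stage m).2 x.
Proof.
move=> le_xm; have [sub eqv] := stage_mono le_xm.
by split; [exact/sub/stage_code | exact/eqv/stage_code].
Qed.

Lemma ext_char_on : char_on (fun _ => True) ext_char.
Proof.
move=> a b _ _.
pose m := maxn (code a).+1 (maxn (code b).+1 (code (a + b)).+1).
have [Da Ea] := @ext_char_stage a m (leq_maxl _ _).
have [Db Eb] := @ext_char_stage b m (leq_trans (leq_maxl _ _) (leq_maxr _ _)).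
have [_ Eab] := @ext_char_stage (a + b) m (leq_trans (leq_maxr _ _) (leq_maxr _ _)).
have [_ g_char] := stage_char m.
by rewrite Ea Eb Eab; apply: g_char.
Qed.

Lemma ext_char_eqv : char_eqv C f ext_char.
Proof.
move=> c Cc; have [_ Ec] := @ext_char_stage c (code c).+1 (leqnn _).
have [_ eqv] := @stage_mono 0 (code c).+1 isT.
by rewrite Ec; exact: eqv.
Qed.

End Extension.

Theorem char_extension (V : zmodType) (code : V -> nat) (decode : nat -> V)
    (C : V -> Prop) (f : V -> R) :
  cancel code decode -> is_subgroup C -> char_on C f ->
  exists g, char_on (fun _ => True) g /\ char_eqv C f g.
Proof.
move=> codeK C_subgroup f_char; exists (ext_char code decode C f).
by split; [exact: ext_char_on | exact: ext_char_eqv].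
Qed.

Definition vcode (F : countNzRingType) (vT : vectType F) (x : vT) : nat :=
  pickle (VectorInternalTheory.v2r x).

Definition vdecode (F : countNzRingType) (vT : vectType F) (n : nat) : vT :=
  if unpickle n is Some r then VectorInternalTheory.r2v r else 0.

Lemma vcodeK (F : countNzRingType) (vT : vectType F) :
  cancel (@vcode F vT) (@vdecode F vT).
Proof. by move=> x; rewrite /vcode /vdecode pickleK VectorInternalTheory.v2rK. Qed.

Section Transfer.
Variable K : fieldExtType rat.
Variables (A B : K -> Prop) (y : K).
Hypotheses (A_subgroup : is_subgroup A) (y_neq0 : y != 0)
  (yA_sub_B : forall a, A a -> B (y * a))
  (B_units : forall u a, unit_OK u -> B a -> B (u * a)).

Definition comap_mul (psi : K -> R) : K -> R := fun a => psi (y * a).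

Lemma is_char_comap psi : is_char B psi -> is_char A (comap_mul psi).
Proof.
by move=> psi_char a a' Aa Aa'; rewrite /comap_mul mulrDr; apply: psi_char; exact: yA_sub_B.
Qed.

Lemma char_eq_comap psi psi' :
  char_eq B psi psi' -> char_eq A (comap_mul psi) (comap_mul psi').
Proof. by move=> E a Aa; apply/E/yA_sub_B. Qed.

Lemma comap_mul_surj chi : is_char A chi ->
  exists psi, char_on (fun _ => True) psi /\ char_eq A chi (comap_mul psi).
Proof.
move=> chi_char.
pose yA x := A (y^-1 * x).
have yA_subgroup : is_subgroup yA.
  split; rewrite /yA.
  - by rewrite mulr0; exact: subgroup0.
  - by move=> a a' Aa Aa'; rewrite mulrDr; exact: subgroupD.
  - by move=> a Aa; rewrite mulrN; exact: subgroupN.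
have yA_char : char_on yA (fun x => chi (y^-1 * x)).
  by move=> a a' Aa Aa'; rewrite mulrDr; exact: chi_char.
have [psi [psi_char chi_psi]] := char_extension (@vcodeK _ K) yA_subgroup yA_char.
exists psi; split => // a Aa.
by have := chi_psi (y * a); rewrite /yA /comap_mul mulKf //; apply.
Qed.

Lemma unit_act_comap u psi : unit_act u (comap_mul psi) = comap_mul (unit_act u psi).
Proof. by apply: functional_extensionality => a; rewrite /unit_act /comap_mul mulrCA. Qed.

Section Pullback.
Variable S : (K -> R) -> Prop.
Hypotheses (S_dual : dual_subset A S) (S_closed : dual_closed A S)
  (S_infinite : dual_infinite A S) (S_invariant : unit_invariant S).

Definition pullback (psi : K -> R) : Prop := is_char B psi /\ S (comap_mul psi).

Lemma pullback_dual : dual_subset B pullback.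
Proof.
case: S_dual => _ S_sat; split=> [psi [] // | psi psi' [_ S_psi] psi'_char E].
by split => //; apply: S_sat S_psi (is_char_comap psi'_char) (char_eq_comap E).
Qed.

Lemma pullback_closed : dual_closed B pullback.
Proof.
move=> psi psi_char near_psi; split => //.
apply: S_closed (is_char_comap psi_char) _ => F eps eps_gt0.
have [psi' [[_ S_psi'] near]] := near_psi (map (fun a => y * a) F) eps eps_gt0.
exists (comap_mul psi'); split => // a Fa Aa.
by apply: near; [exact: (in_map (fun a => y * a)) | exact: yA_sub_B].
Qed.

Lemma pullback_infinite : dual_infinite B pullback.
Proof.
case: S_dual => S_char S_sat; move=> l.
have [chi [S_chi chi_notin]] := S_infinite (map comap_mul l).
have [psi [psi_char chi_psi]] := comap_mul_surj (S_char _ S_chi).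
have psiB_char : is_char B psi by exact: char_on_subset psi_char.
exists psi; split.
  by split => //; apply: S_sat S_chi (is_char_comap psiB_char) chi_psi.
move=> psi' l_psi' psi_psi'; apply: (chi_notin (comap_mul psi')); first exact: in_map.
move=> a Aa; transitivity (comap_mul psi a); first exact: chi_psi.
exact: psi_psi' (yA_sub_B Aa).
Qed.

Lemma pullback_invariant : unit_invariant pullback.
Proof.
move=> u psi u_unit [psi_char S_psi]; split.
  by move=> a a' Ba Ba'; rewrite /unit_act mulrDr; apply: psi_char; exact: B_units.
by rewrite -unit_act_comap; exact: S_invariant.
Qed.

End Pullback.

Lemma ID_property_comap : ID_property B -> ID_property A.
Proof.
move=> B_ID S S_dual S_closed S_infinite S_invariant chi chi_char.
have [psi [psi_char chi_psi]] := comap_mul_surj chi_char.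
have psiB_char : is_char B psi by exact: char_on_subset psi_char.
have [_ S_psi] := B_ID _ (pullback_dual S_dual) (pullback_closed S_closed)
  (pullback_infinite S_dual S_infinite) (pullback_invariant S_invariant) psi psiB_char.
case: S_dual => _ S_sat; apply: S_sat S_psi chi_char _ => a Aa.
by symmetry; exact: chi_psi.
Qed.

End Transfer.

Lemma in_OK_integral (K : fieldExtType rat) (x : K) :
  in_OK x <-> integralOver (intr : int -> K) x.
Proof. by split=> [[p [p_monic px]] | [p p_monic px]]; exists p. Qed.

Lemma in_OK_subgroup (K : fieldExtType rat) : is_subgroup (@in_OK K).
Proof.
split.
- exact/in_OK_integral/integral0.
- by move=> a b /in_OK_integral Ha /in_OK_integral Hb; apply/in_OK_integral/integral_add.
- by move=> a /in_OK_integral Ha; apply/in_OK_integral/integral_opp.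
Qed.

Lemma in_OK_mul (K : fieldExtType rat) (u a : K) : in_OK u -> in_OK a -> in_OK (u * a).
Proof. by move=> /in_OK_integral Hu /in_OK_integral Ha; apply/in_OK_integral/integral_mul. Qed.

Theorem proposition4p2 (K : fieldExtType rat) (J : K -> Prop) :
  is_ideal_OK J -> nonzero_ideal J ->
  (ID_property J <-> ID_property (@in_OK K)).
Proof.
move=> [J_OK [J0 [JD [JN J_mul]]]] [x [Jx x_neq0]].
have J_subgroup : is_subgroup J by split.
have J_units u a : unit_OK u -> J a -> J (u * a) by move=> [u_OK _]; exact: J_mul.
have OK_units (u a : K) : unit_OK u -> in_OK a -> in_OK (u * a).
  by move=> [u_OK _]; exact: in_OK_mul.
split.
- apply: (ID_property_comap (in_OK_subgroup K) (y := x)) => //; first exact/eqP.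
  by move=> a a_OK; rewrite mulrC; exact: J_mul.
- apply: (ID_property_comap J_subgroup (y := 1)) => //; first exact: oner_neq0.
  by move=> a Ja; rewrite mul1r; exact: J_OK.
Qed.
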